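(* Let $m,n\in\mathbb N$ and $1\le q<\infty$, with $q'$ the conjugate exponent ($1/q+1/q'=1$). For each complex matrix $a=(a_{\mathbf i})_{\mathbf i\in\mathcal M(m,n)}$, \[\|a\|_{\ell_{\frac{qm}{(q-1)m+1},1}}\le m^{1/q}\sum_{k=1}^m\|a\|_{\ell_1(\{k\})[\ell_{q'}(\widehat{\{k\}})]}.\]
   Context: $\mathcal M(m,n)=\{(i_1,\dots,i_m):1\le i_k\le n\}$. For $k\in\{1,\dots,m\}$, $\widehat{\{k\}}=\{1,\dots,m\}\setminus\{k\}$, and $\mathcal M(\widehat{\{k\}},n)$ is the set of maps $\mathbf i:\widehat{\{k\}}\to\{1,\dots,n\}$; for $j\in\{1,\dots,n\}$ and $\mathbf i\in\mathcal M(\widehat{\{k\}},n)$, $j\oplus\mathbf i\in\mathcal M(m,n)$ equals $j$ at position $k$ and $\mathbf i$ elsewhere. Then $\|a\|_{\ell_1(\{k\})[\ell_{r}(\widehat{\{k\}})]}=\sum_{j=1}^n\big(\sum_{\mathbf i\in\mathcal M(\widehat{\{k\}},n)}|a_{j\oplus\mathbf i}|^{r}\big)^{1/r}$ (with the inner sum replaced by a max when $r=\infty$). For finite $I$ and $1\le p<\infty$, $\|x\|_{\ell_{p,1}(I)}=\sum_k x_k^*(k^{1/p}-(k-1)^{1/p})$, $x^*$ the non-increasing rearrangement of $(|x_i|)$. *)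

From HB Require Import structures.
From mathcomp Require Import all_boot all_order all_algebra.
From mathcomp Require Import all_classical all_reals.
From mathcomp Require Import exp.
From mathcomp Require complex.

Set Implicit Arguments.
Unset Strict Implicit.
Unset Printing Implicit Defensive.
Import Order.TTheory GRing.Theory Num.Theory.
Local Open Scope ring_scope.

Notation Cplx R := (complex.complex R).
Definition cmod {R : realType} (z : Cplx R) : R := complex.ComplexField.Normc.normc z.

(* M(m,n) = maps {1..m} -> {1..n}, realised as 'I_m -> 'I_n. *)
Definition multi_index (m n : nat) := {ffun 'I_m -> 'I_n}.

Definition hat_index (m n : nat) (k : 'I_m) :=
  {ffun {l : 'I_m | l != k} -> 'I_n}.

(* j (+) i : equals j at position k and i elsewhere. *)
Definition oplus_index (m n : nat) (k : 'I_m) (j : 'I_n)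
  (i : hat_index n k) : multi_index m n :=
  [ffun l : 'I_m => match insub l : option {l : 'I_m | l != k} with
                    | Some l' => i l'
                    | None => j end].

Definition conj_exp {R : realType} (q : R) : \bar R :=
  if q == 1 then (+oo)%E else (q / (q - 1))%:E.

Definition mixed_norm {R : realType} (m n : nat) (k : 'I_m) (r : \bar R)
  (a : multi_index m n -> Cplx R) : R :=
  \sum_(j : 'I_n)
    match r with
    | r'%:E => (\sum_(i : hat_index n k) cmod (a (oplus_index j i)) `^ r')
                 `^ (r'^-1)
    | +oo%E => \big[Num.max/0]_(i : hat_index n k) cmod (a (oplus_index j i))
    | -oo%E => 0
    end.

Definition decr_rearr {R : realType} (I : finType) (x : I -> R) : seq R :=
  sort (fun u v : R => v <= u) [seq `|x i| | i <- enum I].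

Definition lorentz_p1 {R : realType} (I : finType) (p : R) (x : I -> R) : R :=
  let s := decr_rearr x in
  \sum_(k < size s) s`_k * ((k.+1)%:R `^ p^-1 - (k%:R) `^ p^-1).

(* Put theta = 1/p = 1 - (1 - 1/m)/q.  Each increment (k+1)^theta - k^theta of
   the Lorentz norm is at most (k+1)^(theta-1) = rho_k^(1/q) with
   rho_k = (k+1)^(1/m - 1), so it suffices to bound sum_k |a(tau k)| rho_k^(1/q)
   along an arbitrary enumeration tau of the multi-indices.

   For q = 1, peel off the smallest nonzero value t of |a|, i.e. write
   |a| = t 1_A + a' with A the support.  For an indicator, the weights satisfy
   sum_(k < |A|) rho_k <= m |A|^(1/m), and |A|^(1/m) <= sum_l |pi_l A| since A
   lies in the cube over the union of its coordinate projections; the right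
   side is the l_1[l_oo] norm of 1_A, and t times it plus the l_1[l_oo] norms
   of a' is at most those of |a|.

   For q > 1 let beta_k(j) be the inner l_q' norms, S = sum_k sum_j beta_k(j)
   and v(e) = min_k beta_k(e_k) >= |a(e)|.  Young's inequality splits
   |a(e)| rho^(1/q) into a multiple of v(e) rho, controlled by the case q = 1
   applied to v (whose l_1[l_oo] norms total at most S), and a multiple of
   |a(e)|^q' v(e)^(-q'/q), whose sum over e is at most S because v(e) is one
   of the beta_k(e_k). *)

From mathcomp Require Import all_boot all_order all_algebra.
From mathcomp Require Import all_classical all_reals.
From mathcomp Require Import exp.
From mathcomp Require Import ring lra.

Set Implicit Arguments.
Unset Strict Implicit.
Unset Printing Implicit Defensive.
Import Order.TTheory GRing.Theory Num.Theory.
Local Open Scope ring_scope.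

Section OplusIndex.
Variables (m n : nat) (k : 'I_m).

Definition restrict_index (e : multi_index m n) : hat_index n k :=
  [ffun l => e (val l)].

Lemma oplus_index_at (j : 'I_n) (i : hat_index n k) : oplus_index j i k = j.
Proof. by rewrite /oplus_index ffunE insubN // negbK. Qed.

Lemma restrict_oplus_index (j : 'I_n) (i : hat_index n k) :
  restrict_index (oplus_index j i) = i.
Proof.
apply/ffunP => l; rewrite !ffunE insubT ?(valP l) //= => l_neq_k.
by congr (i _); apply: val_inj.
Qed.

Lemma oplus_restrict_index (e : multi_index m n) :
  oplus_index (e k) (restrict_index e) = e.
Proof.
apply/ffunP => l; rewrite ffunE.
case: insubP => [l' _ <-|]; first by rewrite ffunE.
by rewrite negbK => /eqP ->.
Qed.

Lemma sum_oplus_index (V : nmodType) (F : multi_index m n -> V) :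
  \sum_e F e = \sum_(j < n) \sum_(i : hat_index n k) F (oplus_index j i).
Proof.
rewrite pair_big /=.
rewrite (reindex (fun p : 'I_n * hat_index n k => oplus_index p.1 p.2)) //=.
exists (fun e : multi_index m n => (e k, restrict_index e)) => [[j i] _|e _] /=.
  by rewrite oplus_index_at restrict_oplus_index.
by rewrite oplus_restrict_index.
Qed.

End OplusIndex.

Lemma cmod_ge0 (R : realType) (z : Cplx R) : 0 <= cmod z.
Proof. by case: z => x y; apply: sqrtr_ge0. Qed.

Section PowerInequalities.
Variable R : realType.
Implicit Types (al c h s x y : R).

Lemma powR_le_affine al h : 0 <= h -> 0 < al <= 1 ->
  h `^ al <= al * h + (1 - al).
Proof.
move=> h_ge0 /andP[al_gt0 al_le1].
have [->|al_neq1] := eqVneq al 1; first by rewrite powRr1 // mul1r subrr addr0.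
have al_lt1 : al < 1 by rewrite lt_neqAle al_neq1.
have := @conjugate_powR R (h `^ al) 1 al^-1 (1 - al)^-1 (powR_ge0 _ _) ler01.
rewrite invr_gt0 al_gt0 invr_gt0 subr_gt0 al_lt1 !invrK addrC subrK.
move=> /(_ isT isT erefl).
by rewrite mulr1 -powRrM mulfV ?gt_eqF // powRr1 // powR1 mul1r [h * _]mulrC.
Qed.

Lemma ler_powR_npos s x y : s <= 0 -> 0 < x -> x <= y -> y `^ s <= x `^ s.
Proof.
move=> s_le0 x_gt0 x_le_y; have y_gt0 := lt_le_trans x_gt0 x_le_y.
rewrite -(opprK s) !(powRN _ (- s)) lef_pV2 ?posrE ?powR_gt0 //.
by apply: ge0_ler_powR; rewrite ?oppr_ge0 ?nnegrE // ltW.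
Qed.

Lemma powR_sub_scale al x c : 0 < x -> 0 <= c ->
  x `^ al - c `^ al = x `^ al * (1 - (c / x) `^ al).
Proof.
move=> x_gt0 c_ge0.
have -> : c `^ al = x `^ al * (c / x) `^ al.
  rewrite -powRM ?divr_ge0 ?(ltW x_gt0) //.
  by rewrite mulrC divfK ?gt_eqF.
by rewrite mulrBr mulr1.
Qed.

Lemma powR_pred_scale al x c : 0 < x ->
  x `^ (al - 1) * (x - c) = x `^ al * (1 - c / x).
Proof.
move=> x_gt0; have x_neq0 : x != 0 by rewrite gt_eqF.
rewrite powRB ?x_neq0 ?implybT // powRr1 ?ltW //.
by rewrite -mulrA mulrBr mulVf // [_^-1 * c]mulrC.
Qed.

Lemma powR_sub_le_pred al x c : al <= 1 -> 0 < x -> 0 <= c <= x ->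
  x `^ al - c `^ al <= x `^ (al - 1) * (x - c).
Proof.
move=> al_le1 x_gt0 /andP[c_ge0 c_le_x].
rewrite powR_sub_scale // powR_pred_scale //.
rewrite ler_wpM2l ?powR_ge0 // lerD2l lerN2.
have [->|c_neq0] := eqVneq c 0; first by rewrite mul0r powR_ge0.
have c_gt0 : 0 < c by rewrite lt_def c_neq0.
by apply: ger1_powR; rewrite // divr_gt0 //= ler_pdivrMr // mul1r.
Qed.

Lemma powR_sub_ge_pred al x c : 0 < al <= 1 -> 0 < x -> 0 <= c <= x ->
  al * (x `^ (al - 1) * (x - c)) <= x `^ al - c `^ al.
Proof.
move=> al01 x_gt0 /andP[c_ge0 _].
rewrite powR_sub_scale // powR_pred_scale // mulrCA ler_wpM2l ?powR_ge0 //.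
have := powR_le_affine (divr_ge0 c_ge0 (ltW x_gt0)) al01.
by rewrite mulrBr mulr1; lra.
Qed.

End PowerInequalities.

Definition lorentz_weight (R : realType) (al : R) (k : nat) : R :=
  (k.+1)%:R `^ (al - 1).

Lemma lorentz_weight_ge0 (R : realType) (al : R) k : 0 <= lorentz_weight al k.
Proof. exact: powR_ge0. Qed.

Lemma powR_succ_sub_le (R : realType) (al : R) (k : nat) : al <= 1 ->
  (k.+1)%:R `^ al - k%:R `^ al <= lorentz_weight al k.
Proof.
move=> al_le1.
have := @powR_sub_le_pred R al (k.+1)%:R k%:R al_le1 (ltr0Sn _ _).
have -> : (k.+1)%:R - k%:R = 1 :> R by rewrite -natr1 addrAC subrr add0r.
by rewrite mulr1 ler0n ler_nat leqnSn; apply.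
Qed.

Lemma sum_lorentz_weight_le (R : realType) (al : R) (N : nat)
    (b : 'I_N -> bool) : 0 < al <= 1 ->
  \sum_(k < N) (b k)%:R * lorentz_weight al k
    <= al^-1 * (\sum_(k < N) ((b k)%:R : R)) `^ al.
Proof.
move=> al01; have /andP[al_gt0 al_le1] := al01.
elim: N b => [|N IH] b.
  by rewrite !big_ord0 mulr_ge0 ?invr_ge0 ?powR_ge0 ?ltW.
rewrite !big_ord_recr /=; set c := \sum_(k < N) ((b _)%:R : R).
have c_ge0 : 0 <= c by apply: sumr_ge0 => k _; apply: ler0n.
have c_le_N : c <= N%:R.
  rewrite /c -[N in X in _ <= X]card_ord -sum1_card natr_sum ler_sum // => k _.
  by case: (b _).
case: (b ord_max); last by rewrite mul0r !addr0; apply: IH.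
have weight_le : lorentz_weight al N <= al^-1 * ((c + 1) `^ al - c `^ al).
  apply: (@le_trans _ _ ((c + 1) `^ (al - 1))).
    rewrite /lorentz_weight -natr1; apply: ler_powR_npos; rewrite ?subr_le0 //.
      by rewrite ltr_wpDl.
    by rewrite lerD2r.
  have := powR_sub_ge_pred al01 (ltr_wpDl c_ge0 ltr01) (c := c).
  rewrite c_ge0 lerDl ler01 addrAC subrr add0r mulr1 => /(_ isT).
  by move=> h; rewrite -(ler_pM2l al_gt0) mulrA mulfV ?gt_eqF // mul1r.
rewrite mulr1n mul1r; apply: le_trans (lerD (IH _) weight_le) _.
by rewrite -mulrDr addrCA subrr addr0.
Qed.

Lemma card_bigcup_leq (T I : finType) (F : I -> {set T}) :
  (#|\bigcup_i F i| <= \sum_i #|F i|)%N.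
Proof.
apply: (big_rec2 (fun (X : {set T}) y => #|X| <= y)%N) => [|i X y _ le_Xy].
  by rewrite cards0.
by rewrite (leq_trans (leq_card_setU _ _)) // leq_add2l.
Qed.

Definition coord_image (T : finType) (m : nat) (k : 'I_m)
    (A : {set {ffun 'I_m -> T}}) : {set T} :=
  [set (e : {ffun 'I_m -> T}) k | e in A].

Lemma powR_card_le_sum_card_proj (R : realType) (T : finType) (m : nat)
    (A : {set {ffun 'I_m -> T}}) : (0 < m)%N ->
  (#|A|%:R : R) `^ (m%:R^-1) <= \sum_(l < m) (#|coord_image l A|%:R : R).
Proof.
move=> m_gt0; set U := \bigcup_(l < m) coord_image l A.
set P := (\sum_(l < m) #|coord_image l A|)%N.
have card_A : (#|A| <= P ^ m)%N.
  apply: (@leq_trans (#|U| ^ m)); last by rewrite leq_exp2r // card_bigcup_leq.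
  rewrite -[m in (_ ^ m)%N]card_ord -card_ffun_on; apply: subset_leq_card.
  apply/fintype.subsetP => e eA; apply/ffun_onP => l.
  by apply/bigcupP; exists l => //; apply/imsetP; exists e.
have m_neq0 : (m%:R : R) != 0 by rewrite pnatr_eq0 -lt0n.
rewrite -natr_sum -/P; apply: (@le_trans _ _ ((P ^ m)%N%:R `^ (m%:R^-1))).
  by apply: ge0_ler_powR; rewrite ?invr_ge0 ?nnegrE ?ler_nat.
by rewrite natrX -powR_mulrn ?ler0n // -powRrM mulfV // powRr1 ?ler0n.
Qed.

(* The l_1({k})[l_oo(\hat{k})] norm of a real family; [mixed_norm k +oo a] is
   convertible to [mixed_sup_norm k (fun e => cmod (a e))]. *)
Definition mixed_sup_norm (R : realType) (m n : nat) (k : 'I_m)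
    (v : multi_index m n -> R) : R :=
  \sum_(j < n) \big[Num.max/0]_(i : hat_index n k) v (oplus_index j i).

Lemma mixed_sup_norm_ge0 (R : realType) m n (k : 'I_m)
    (v : multi_index m n -> R) : 0 <= mixed_sup_norm k v.
Proof. by apply: sumr_ge0 => j _; apply: bigmax_ge_id. Qed.

Section Peeling.
Variables (R : realType) (m n : nat) (v : multi_index m n -> R).
Variables (A : {set multi_index m n}) (t : R).
Hypotheses (t_ge0 : 0 <= t) (v_ge_t : forall e, e \in A -> t <= v e).

Definition peel (e : multi_index m n) : R := if e \in A then v e - t else 0.

Lemma peel_ge0 e : 0 <= peel e.
Proof. by rewrite /peel; case: ifP => // /v_ge_t; rewrite subr_ge0. Qed.

Lemma bigmax_peel (k : 'I_m) (j : 'I_n) :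
  t * (j \in coord_image k A)%:R
    + \big[Num.max/0]_(i : hat_index n k) peel (oplus_index j i)
  <= \big[Num.max/0]_(i : hat_index n k) v (oplus_index j i).
Proof.
set M := \big[Num.max/0]_(i : hat_index n k) v (oplus_index j i).
have le_M (i : hat_index n k) : v (oplus_index j i) <= M by apply: le_bigmax.
have peel_le (i : hat_index n k) : peel (oplus_index j i) <= M.
  rewrite /peel; case: ifP => _; last exact: bigmax_ge_id.
  by rewrite lerBlDr (le_trans (le_M i)) // lerDl.
case: (boolP (j \in coord_image k A)) => [|_] /=; last first.
  rewrite mulr0 add0r; apply: bigmax_le => [|i _]; first exact: bigmax_ge_id.
  exact: peel_le.
case/imsetP => e eA j_eq.
have t_le_M : t <= M.
  have := le_M (restrict_index k e); rewrite j_eq oplus_restrict_index.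
  exact: le_trans (v_ge_t eA).
rewrite mulr1 addrC -lerBrDr; apply: bigmax_le; first by rewrite subr_ge0.
move=> i _; rewrite /peel; case: ifP => _; first by rewrite lerD2r.
by rewrite subr_ge0.
Qed.

Lemma mixed_sup_norm_peel (k : 'I_m) :
  t * #|coord_image k A|%:R + mixed_sup_norm k peel <= mixed_sup_norm k v.
Proof.
rewrite /mixed_sup_norm -sum1_card big_mkcond natr_sum mulr_sumr -big_split /=.
by apply: ler_sum => j _; apply: bigmax_peel.
Qed.

End Peeling.

Lemma sum_lorentz_weight_mem_le (R : realType) (m n N : nat)
    (tau : 'I_N -> multi_index m n) (A : {set multi_index m n}) :
  (0 < m)%N -> injective tau ->
  \sum_(k < N) (tau k \in A)%:R * lorentz_weight (m%:R^-1 : R) k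
    <= m%:R * \sum_(l < m) (#|coord_image l A|%:R : R).
Proof.
move=> m_gt0 tau_inj.
have m_gt0R : (0 : R) < m%:R by rewrite ltr0n.
have m01 : 0 < (m%:R : R)^-1 <= 1 by rewrite invr_gt0 m_gt0R invf_le1 // ler1n.
have := sum_lorentz_weight_le (fun k => tau k \in A) m01.
move/le_trans; apply.
rewrite invrK ler_pM2l //.
apply: le_trans (@powR_card_le_sum_card_proj R _ _ A m_gt0).
apply: ge0_ler_powR; rewrite ?invr_ge0 ?nnegrE ?ler0n //.
  by apply: sumr_ge0 => k _; apply: ler0n.
rewrite -natr_sum ler_nat.
have -> : (\sum_(k < N) (tau k \in A))%N = #|[set k | tau k \in A]|.
  by rewrite -sum1dep_card [RHS]big_mkcond.
rewrite -(card_imset _ tau_inj); apply: subset_leq_card.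
by apply/fintype.subsetP => x /imsetP[k]; rewrite inE => kA ->.
Qed.

Lemma sum_lorentz_weight_le_mixed_sup (R : realType) (m n N : nat)
    (tau : 'I_N -> multi_index m n) (v : multi_index m n -> R) :
  (0 < m)%N -> injective tau -> (forall e, 0 <= v e) ->
  \sum_(k < N) v (tau k) * lorentz_weight (m%:R^-1) k
    <= m%:R * \sum_(l < m) mixed_sup_norm l v.
Proof.
move=> m_gt0 tau_inj.
have [c] := ubnP #|[set e | v e != 0]|; elim: c v => // c IH v supp_lt v_ge0.
set A := [set e | v e != 0] in supp_lt.
have inA e : (e \in A) = (v e != 0) by rewrite inE.
have [A0|[e1 e1A]] := set_0Vmem A.
  rewrite big1 => [|k _].
    by rewrite mulr_ge0 ?ler0n ?sumr_ge0 // => l _; apply: mixed_sup_norm_ge0.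
  have : tau k \notin A by rewrite A0 inE.
  by rewrite inA negbK => /eqP ->; rewrite mul0r.
have [e0 e0A e0_min] := @arg_minP _ _ _ e1 (fun e => e \in A) v e1A.
set t := v e0.
have t_gt0 : 0 < t by move: e0A; rewrite /= inA lt_def v_ge0 andbT.
have v_split e : v e = t * (e \in A)%:R + peel v A t e.
  rewrite /peel; case: ifP => eA; first by rewrite mulr1 addrC subrK.
  by rewrite mulr0 add0r; apply/eqP; move/negbT: eA; rewrite inA negbK.
have supp_peel : (#|[set e | peel v A t e != 0%R]| < c)%N.
  rewrite -ltnS (leq_trans _ supp_lt) // ltnS.
  apply: proper_card; apply/properP; split.
    apply/fintype.subsetP => e; rewrite inE /peel.
    by case: ifP => // _; rewrite eqxx.
  by exists e0 => //; rewrite inE /peel e0A subrr eqxx.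
have sum_split : \sum_(k < N) v (tau k) * lorentz_weight m%:R^-1 k
    = t * \sum_(k < N) (tau k \in A)%:R * lorentz_weight m%:R^-1 k
      + \sum_(k < N) peel v A t (tau k) * lorentz_weight m%:R^-1 k.
  rewrite mulr_sumr -big_split; apply: eq_bigr => k _ /=.
  by rewrite {1}v_split mulrDl mulrA.
have mem_le := sum_lorentz_weight_mem_le R A m_gt0 tau_inj.
have peel_le := IH _ supp_peel (peel_ge0 e0_min).
rewrite sum_split.
apply: le_trans (lerD (ler_wpM2l (ltW t_gt0) mem_le) peel_le) _.
rewrite mulrCA -mulrDr ler_wpM2l ?ler0n // mulr_sumr -big_split.
by apply: ler_sum => l _; apply: mixed_sup_norm_peel (ltW t_gt0) e0_min l.
Qed.

Lemma ler_sum_inj (R : numDomainType) (I T : finType) (f : I -> T)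
    (F : T -> R) : injective f -> (forall x, 0 <= F x) ->
  \sum_i F (f i) <= \sum_x F x.
Proof.
move=> f_inj F_ge0.
have -> : \sum_i F (f i) = \sum_(i in [set: I]) F (f i).
  by apply: eq_bigl => i; rewrite inE.
rewrite -(big_imset _ (in2W f_inj)) /=.
by rewrite [X in _ <= X](bigID (mem (f @: [set: I]))) /= lerDl sumr_ge0.
Qed.

Lemma lorentz_p1_le (R : realType) (I : finType) (p : R) (x : I -> R) :
  1 <= p ->
  exists tau : 'I_#|I| -> I, injective tau /\
    lorentz_p1 p x <= \sum_(k < #|I|) `|x (tau k)| * lorentz_weight p^-1 k.
Proof.
move=> p_ge1.
have pV_le1 : p^-1 <= 1 by rewrite invf_le1 // (lt_le_trans ltr01).
rewrite /lorentz_p1 /decr_rearr.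
set s := [seq `|x i| | i <- enum I].
have size_s : size s = #|I| by rewrite size_map -cardE.
have [js js_perm ->] := perm_iota_sort (fun u v : R => v <= u) 0 s.
have size_js : size js = #|I| by rewrite (perm_size js_perm) size_iota.
have js_lt k : (k < #|I|)%N -> (nth 0%N js k < #|I|)%N.
  move=> k_lt; have : nth 0%N js k \in iota 0 (size s).
    by rewrite -(perm_mem js_perm) mem_nth ?size_js.
  by rewrite mem_iota size_s.
(* The default [enum_val k] is never used: [nth 0 js k] is a valid index. *)
exists (fun k => nth (enum_val k) (enum I) (nth 0%N js k)); split.
  move=> k1 k2; rewrite [in RHS](set_nth_default (enum_val k1)); last first.
    by rewrite -cardE js_lt.
  move/eqP; rewrite nth_uniq ?enum_uniq -?cardE ?js_lt //.
  rewrite nth_uniq ?(perm_uniq js_perm) ?iota_uniq ?size_js //.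
  by move=> /eqP/val_inj.
rewrite size_map size_js; apply: ler_sum => k _.
rewrite (nth_map 0%N) ?size_js // (nth_map (enum_val k)) -?cardE ?js_lt //.
by rewrite ler_wpM2l // powR_succ_sub_le.
Qed.

Section LorentzExponent.
Variables (R : realType) (m : nat) (q : R).
Hypotheses (m_gt0 : (0 < m)%N) (q_ge1 : 1 <= q).

Lemma lorentz_exponent_ge1 : 1 <= q * m%:R / ((q - 1) * m%:R + 1).
Proof.
have m_ge1 : (1 : R) <= m%:R by rewrite ler1n.
have denom_gt0 : 0 < (q - 1) * m%:R + 1.
  by rewrite ltr_wpDl // mulr_ge0 ?subr_ge0 // ler0n.
by rewrite ler_pdivlMr // mul1r mulrBl mul1r; lra.
Qed.

Lemma lorentz_weight_exponent k :
  lorentz_weight (q * m%:R / ((q - 1) * m%:R + 1))^-1 k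
  = lorentz_weight (m%:R^-1) k `^ q^-1.
Proof.
rewrite /lorentz_weight -powRrM invf_div; congr (_ `^ _).
by field; rewrite gt_eqF ?(lt_le_trans ltr01 q_ge1) // pnatr_eq0 -lt0n m_gt0.
Qed.

End LorentzExponent.

Lemma young_split (R : realType) (q r c u v h : R) :
  0 < q -> 0 < r -> q^-1 + r^-1 = 1 -> 0 < c -> 0 <= u -> u <= v -> 0 <= h ->
  u * h `^ q^-1 <= c `^ q^-1 * (v * h / c / q + u `^ r * v `^ (- (r / q)) / r).
Proof.
move=> q_gt0 r_gt0 qr c_gt0 u_ge0 u_le_v h_ge0.
have v_ge0 := le_trans u_ge0 u_le_v.
have [v0|v_neq0] := eqVneq v 0.
  have -> : u = 0 by apply: le_anti; rewrite u_ge0 -v0 u_le_v.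
  rewrite mul0r mulr_ge0 ?powR_ge0 // addr_ge0 //.
    by rewrite !divr_ge0 ?mulr_ge0 // ltW.
  by rewrite divr_ge0 ?mulr_ge0 ?powR_ge0 // ltW.
set A := (v * h / c) `^ q^-1; set B := u * v `^ (- q^-1).
have vhc_ge0 : 0 <= v * h / c by rewrite divr_ge0 ?mulr_ge0 // ltW.
have AB : c `^ q^-1 * (A * B) = u * h `^ q^-1.
  rewrite mulrA -powRM ?(ltW c_gt0) // [c * _]mulrCA divff ?gt_eqF // mulr1.
  rewrite powRM //.
  have vV : v `^ q^-1 * v `^ (- q^-1) = 1.
    by rewrite -powRD ?v_neq0 ?implybT // subrr powRr0.
  by rewrite /B -[RHS]mulr1 -vV; ring.
have Aq : A `^ q = v * h / c.
  by rewrite /A -powRrM mulVf ?gt_eqF // powRr1.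
have Br : B `^ r = u `^ r * v `^ (- (r / q)).
  by rewrite /B powRM ?powR_ge0 // -powRrM mulNr [q^-1 * r]mulrC.
rewrite -AB ler_wpM2l ?powR_ge0 // -Aq -Br.
have B_ge0 : 0 <= B by rewrite mulr_ge0 ?powR_ge0.
exact: conjugate_powR (powR_ge0 _ _) B_ge0 q_gt0 r_gt0 qr.
Qed.

Section HolderStep.
Variables (R : realType) (m n : nat) (q : R) (a : multi_index m n -> Cplx R).
Hypotheses (m_gt0 : (0 < m)%N) (q_gt1 : 1 < q).

Let r := q / (q - 1).
Let q_gt0 : 0 < q. Proof. exact: lt_trans q_gt1. Qed.
Let r_gt0 : 0 < r. Proof. by rewrite divr_gt0 // subr_gt0. Qed.

Let conj_qr : q^-1 + r^-1 = 1.
Proof. by rewrite /r invf_div; field; rewrite gt_eqF. Qed.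

Let inner (k : 'I_m) (j : 'I_n) : R :=
  (\sum_(i : hat_index n k) cmod (a (oplus_index j i)) `^ r) `^ r^-1.
Let S := \sum_(k < m) mixed_norm k (conj_exp q) a.

Let mixed_norm_conj_exp k :
  mixed_norm k (conj_exp q) a = \sum_(j < n) inner k j.
Proof. by rewrite /mixed_norm /conj_exp gt_eqF. Qed.

Let inner_le_S k j : inner k j <= S.
Proof.
rewrite /S (bigD1 k) //= mixed_norm_conj_exp (bigD1 j) //= -addrA lerDl.
rewrite addr_ge0 ?sumr_ge0 // => [i _|l _]; first exact: powR_ge0.
by rewrite mixed_norm_conj_exp sumr_ge0 // => i _; apply: powR_ge0.
Qed.

Let cmod_le_inner e k : cmod (a e) <= inner k (e k).
Proof.
have sum_ge : cmod (a e) `^ r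
    <= \sum_(i : hat_index n k) cmod (a (oplus_index (e k) i)) `^ r.
  rewrite (bigD1 (restrict_index k e)) //= oplus_restrict_index lerDl.
  by apply: sumr_ge0 => i _; apply: powR_ge0.
have ri_ge0 : 0 <= r^-1 by rewrite invr_ge0 ltW.
have sum_nneg : \sum_(i : hat_index n k) cmod (a (oplus_index (e k) i)) `^ r
    \in Num.nneg.
  by rewrite nnegrE sumr_ge0 // => i _; apply: powR_ge0.
have := ge0_ler_powR ri_ge0 (powR_ge0 _ _ : _ \in Num.nneg) sum_nneg sum_ge.
by rewrite -powRrM mulfV ?gt_eqF // powRr1 ?cmod_ge0.
Qed.

Let v (e : multi_index m n) : R := \big[Num.min/S]_(k < m) inner k (e k).

Let v_le_inner e k : v e <= inner k (e k). Proof. exact: bigmin_le. Qed.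

Let cmod_le_v e : cmod (a e) <= v e.
Proof.
apply: le_bigmin => [|k _]; last exact: cmod_le_inner.
exact: le_trans (cmod_le_inner e (Ordinal m_gt0)) (inner_le_S _ _).
Qed.

Let v_ge0 e : 0 <= v e. Proof. exact: le_trans (cmod_ge0 _) (cmod_le_v e). Qed.

Let v_attained e : exists k, v e = inner k (e k).
Proof.
rewrite /v; have [k _ ->] := @eq_bigmin _ _ _ S (Ordinal m_gt0) xpredT
  (fun k => inner k (e k)) isT (fun k _ => inner_le_S _ _).
by exists k.
Qed.

Let mixed_sup_norm_v_le : \sum_(l < m) mixed_sup_norm l v <= S.
Proof.
apply: ler_sum => l _; rewrite mixed_norm_conj_exp; apply: ler_sum => j _.
apply: bigmax_le => [|i _]; first exact: powR_ge0.
by have := v_le_inner (oplus_index j i) l; rewrite oplus_index_at.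
Qed.

Let w (e : multi_index m n) : R := cmod (a e) `^ r * v e `^ (- (r / q)).

Let w_ge0 e : 0 <= w e. Proof. by rewrite mulr_ge0 ?powR_ge0. Qed.

Let sum_w_le : \sum_e w e <= S.
Proof.
apply: (@le_trans _ _
  (\sum_e \sum_(k < m) cmod (a e) `^ r * inner k (e k) `^ (- (r / q)))).
  apply: ler_sum => e _; rewrite /w; have [k ->] := v_attained e.
  rewrite (bigD1 k) //= lerDl sumr_ge0 // => l _.
  by rewrite mulr_ge0 ?powR_ge0.
rewrite exchange_big; apply: ler_sum => k _.
rewrite (sum_oplus_index k) mixed_norm_conj_exp; apply: ler_sum => j _.
under eq_bigr do rewrite oplus_index_at.
rewrite -mulr_suml.
have -> : \sum_(i : hat_index n k) cmod (a (oplus_index j i)) `^ r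
    = inner k j `^ r.
  rewrite -powRrM mulVf ?gt_eqF // powRr1 // sumr_ge0 // => i _.
  exact: powR_ge0.
have [->|inner_neq0] := eqVneq (inner k j) 0.
  by rewrite powR0 ?(gt_eqF r_gt0) // mul0r.
rewrite -powRD; last by rewrite inner_neq0 implybT.
have -> : r - r / q = 1.
  by rewrite /r; field; rewrite (gt_eqF q_gt0) gt_eqF ?subr_gt0.
by rewrite powRr1 ?powR_ge0.
Qed.

Lemma sum_lorentz_weight_le_mixed_norm N (tau : 'I_N -> multi_index m n) :
  injective tau ->
  \sum_(k < N) cmod (a (tau k)) * lorentz_weight (m%:R^-1) k `^ q^-1
    <= m%:R `^ q^-1 * \sum_(k < m) mixed_norm k (conj_exp q) a.
Proof.
move=> tau_inj; have m_gt0R : (0 : R) < m%:R by rewrite ltr0n.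
apply: (@le_trans _ _ (\sum_(k < N) m%:R `^ q^-1 *
    (v (tau k) * lorentz_weight m%:R^-1 k / m%:R / q + w (tau k) / r))).
  apply: ler_sum => k _.
  exact: young_split q_gt0 r_gt0 conj_qr m_gt0R (cmod_ge0 _) (cmod_le_v _)
    (lorentz_weight_ge0 _ _).
rewrite -mulr_sumr ler_wpM2l ?powR_ge0 // big_split /= -!mulr_suml -/S.
have sum_v_le : (\sum_(k < N) v (tau k) * lorentz_weight m%:R^-1 k) / m%:R <= S.
  rewrite ler_pdivrMr // mulrC.
  apply: le_trans (sum_lorentz_weight_le_mixed_sup m_gt0 tau_inj v_ge0) _.
  by apply: ler_wpM2l; [exact: ler0n | exact: mixed_sup_norm_v_le].
have sum_w_tau_le : \sum_(k < N) w (tau k) <= S.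
  exact: le_trans (ler_sum_inj tau_inj w_ge0) sum_w_le.
have inv_ge0 (x : R) : 0 < x -> 0 <= x^-1 by rewrite invr_ge0 => /ltW.
apply: le_trans (lerD (ler_wpM2r (inv_ge0 _ q_gt0) sum_v_le)
                      (ler_wpM2r (inv_ge0 _ r_gt0) sum_w_tau_le)) _.
by rewrite -mulrDr conj_qr mulr1.
Qed.

End HolderStep.

Theorem lemma4p3 (R : realType) (m n : nat) (q : R)
  (hm : (1 <= m)%N) (hq : 1 <= q) (a : multi_index m n -> Cplx R) :
  lorentz_p1 (q * m%:R / ((q - 1) * m%:R + 1)) (fun i => cmod (a i))
  <= m%:R `^ q^-1 * \sum_(k < m) mixed_norm k (conj_exp q) a.
Proof.
have [tau [tau_inj lorentz_le]] :=
  lorentz_p1_le (fun i => cmod (a i)) (lorentz_exponent_ge1 hm hq).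
apply: le_trans lorentz_le _.
under eq_bigr do rewrite ger0_norm ?cmod_ge0 // lorentz_weight_exponent //.
move: hq; rewrite le_eqVlt => /predU1P[<-|q_gt1]; last first.
  exact: sum_lorentz_weight_le_mixed_norm.
rewrite invr1 powRr1 ?ler0n // /conj_exp eqxx.
under eq_bigr do rewrite powRr1 ?lorentz_weight_ge0 //.
exact: sum_lorentz_weight_le_mixed_sup hm tau_inj (fun e => cmod_ge0 (a e)).
Qed.
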